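(* Let $\phi':\mathbb{K}[x_{i|A}:i\in[n],A\subseteq[n]]\to\mathbb{K}[y_i,\beta_j:i,j\in[n]]$ be the ring homomorphism $x_{i|A}\mapsto y_i\prod_{j\in A}\beta_j$, and $I_{\phi'}=\ker\phi'$. Then $$G_L=\{x_{i|A}x_{j|B}-x_{\min(i,j)|A\cap B}\,x_{\max(i,j)|A\cup B}:\ x_{i|A},x_{j|B}\text{ incomparable in }L\}$$ is a reduced Gröbner basis of $I_{\phi'}$ with respect to the graded reverse lexicographic order $<$.
   Context: $L$ is the lattice on the variables $x_{i|A}$ ($i\in[n]$, $A\subseteq[n]$) with $x_{i|A}\le x_{j|B}$ iff $i\le j$ and $A\subseteq B$. Totally order the variables by $x_{i|A}\prec x_{j|B}$ iff $i<j$, or $i=j$ and $|A|<|B|$, or $i=j$, $|A|=|B|$ and $\min(A\setminus B)<\min(B\setminus A)$; index them $1,\dots,N=n2^n$ increasingly and write monomials as $x^u$. The graded reverse lexicographic order: $x^u<x^v$ iff $\deg x^u<\deg x^v$, or degrees are equal and the rightmost nonzero entry of $v-u$ is negative. *)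

From HB Require Import structures.
From mathcomp Require Import all_boot all_order all_algebra.
From mathcomp Require Import mpoly.
Set Implicit Arguments. Unset Strict Implicit. Unset Printing Implicit Defensive.
Import GRing.Theory.
Local Open Scope ring_scope.

Section Defs.
Variable n : nat.

(* Variables x_{i|A}, i in [n] (encoded as 'I_n), A subset of [n]. *)
Definition V := ('I_n * {set 'I_n})%type.

(* The enumeration is only
   a naming device; the monomial order below is defined through prec. *)
Definition NV := #|{: V}|.
Definition xv (K : fieldType) (a : V) : {mpoly K[NV]} := 'X_(enum_rank a).

Definition expo (m : 'X_{1..NV}) (a : V) : nat := m (enum_rank a).

Definition leL (a b : V) : bool := (a.1 <= b.1)%N && (a.2 \subset b.2).
Definition incomparableL (a b : V) : bool := ~~ leL a b && ~~ leL b a.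

(* minimum of a set of indices (with value n on the empty set) *)
Definition setmin (S : {set 'I_n}) : nat := \big[minn/n]_(k in S) (k : nat).

Definition prec (a b : V) : bool :=
  [|| (a.1 < b.1)%N,
      (a.1 == b.1) && (#|a.2| < #|b.2|)%N
    | [&& a.1 == b.1, #|a.2| == #|b.2|
        & (setmin (a.2 :\: b.2) < setmin (b.2 :\: a.2))%N]].

Definition grevlex_lt (u v : 'X_{1..NV}) : Prop :=
  (mdeg u < mdeg v)%N \/
  (mdeg u = mdeg v /\
   exists a : V, expo u a <> expo v a /\ (expo v a < expo u a)%N /\
     forall b : V, prec a b -> expo u b = expo v b).

Definition grevlex_le (u v : 'X_{1..NV}) : Prop := u = v \/ grevlex_lt u v.

Variable K : fieldType.

Definition is_lead_mon (p : {mpoly K[NV]}) (m : 'X_{1..NV}) : Prop :=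
  m \in msupp p /\ forall m', m' \in msupp p -> grevlex_le m' m.

Definition is_groebner_basis (G I : {mpoly K[NV]} -> Prop) : Prop :=
  (forall g, G g -> I g) /\
  (forall f, I f -> f != 0 ->
     exists g, [/\ G g, g != 0 &
       exists mf mg, [/\ is_lead_mon f mf, is_lead_mon g mg & (mg <= mf)%MM]]).

Definition is_reduced_groebner_basis (G I : {mpoly K[NV]} -> Prop) : Prop :=
  is_groebner_basis G I /\
  (forall g, G g -> exists mg, is_lead_mon g mg /\ g@_mg = 1) /\
  (forall g g', G g -> G g' -> g' <> g ->
     forall m mg', m \in msupp g -> is_lead_mon g' mg' -> ~ (mg' <= m)%MM).

Definition yv (i : 'I_n) : {mpoly K[n + n]} := 'X_(lshift n i).
Definition betav (j : 'I_n) : {mpoly K[n + n]} := 'X_(rshift n j).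

Definition phi_img (a : V) : {mpoly K[n + n]} :=
  yv a.1 * \prod_(j in a.2) betav j.

Definition phi' (p : {mpoly K[NV]}) : {mpoly K[n + n]} :=
  p \mPo [tuple phi_img (enum_val k) | k < NV].

Definition I_phi' (p : {mpoly K[NV]}) : Prop := phi' p = 0.

Definition ordmin (i j : 'I_n) : 'I_n := if (i <= j)%N then i else j.
Definition ordmax (i j : 'I_n) : 'I_n := if (i <= j)%N then j else i.

Definition G_L (p : {mpoly K[NV]}) : Prop :=
  exists a b : V, incomparableL a b /\
    p = xv K a * xv K b
        - xv K (ordmin a.1 b.1, a.2 :&: b.2) * xv K (ordmax a.1 b.1, a.2 :|: b.2).

End Defs.

(* The two monomials of x_{i|A} x_{j|B} - x_{min(i,j)|A cap B} x_{max(i,j)|A cup B}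
   have the same image under phi' (the modular law of L), so G_L lies in the
   kernel; for incomparable x_{i|A}, x_{j|B} the join x_{max(i,j)|A cup B} is the
   prec-largest variable involved, which makes x_{i|A} x_{j|B} the leading
   monomial.
   Let f <> 0 lie in the kernel, with leading monomial x^u.  The coefficient of
   phi'(x^u) in phi'(f) must cancel, so f has another monomial x^v with the same
   image.  If the variables of x^u formed a chain of L, x^u would be the
   grevlex-smallest monomial with that image, contradicting x^v < x^u.  So x^u
   contains an incomparable pair, i.e. is divisible by a leading monomial of G_L.
   All monomials of G_L are quadratic, so divisibility among them is equality,
   which yields reducedness. *)

From HB Require Import structures.
From mathcomp Require Import all_boot all_order all_algebra.
From mathcomp Require Import mpoly.
Set Implicit Arguments. Unset Strict Implicit. Unset Printing Implicit Defensive.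
Import GRing.Theory.

Lemma seq_greatest (T : eqType) (R : T -> T -> Prop) (s : seq T) :
  (forall x y z, R x y -> R y z -> R x z) ->
  {in s &, forall x y, R x y \/ R y x} -> s != [::] ->
  exists2 m, m \in s & {in s, forall y, R y m}.
Proof.
move=> R_trans; elim: s => // x s IH R_total _.
have R_xx : R x x by case: (R_total x x); rewrite ?mem_head.
have [->|s_neq0] := eqVneq s [::].
  by exists x; rewrite ?mem_head // => y; rewrite inE => /eqP->.
have [m ms m_max] : exists2 m, m \in s & {in s, forall y, R y m}.
  by apply: IH => // y z ys zs; apply: R_total; rewrite inE ?ys ?zs orbT.
have xs_m : m \in x :: s by rewrite inE ms orbT.
have [xm|mx] := R_total x m (mem_head _ _) xs_m.
- by exists m => // y; rewrite inE => /predU1P [->|/m_max].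
- exists x; first exact: mem_head.
  by move=> y; rewrite inE => /predU1P [->//|/m_max ym]; exact: R_trans ym mx.
Qed.

HB.instance Definition _ := SemiGroup.isComLaw.Build nat minn minnA minnC.

Section SetMin.
Variable n : nat.
Implicit Types (A B S : {set 'I_n}) (k : 'I_n).

Lemma setmin_le S k : k \in S -> (setmin S <= k)%N.
Proof.
rewrite /setmin -big_enum -mem_enum; elim: (enum S) => //= x s IH.
by rewrite in_cons big_cons => /predU1P [->|/IH]; rewrite geq_min ?leqnn // => ->; rewrite orbT.
Qed.

Lemma setmin_leqn S : (setmin S <= n)%N.
Proof.
rewrite /setmin; elim/big_ind: _ => // [x y xn _|k _]; last exact: ltnW.
exact: leq_trans (geq_minl x y) xn.
Qed.

Lemma setmin_mem S : (setmin S < n)%N -> exists2 k, k \in S & setmin S = k.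
Proof.
rewrite /setmin; elim/big_ind: _ => [|x y IHx IHy|k kS _]; first by rewrite ltnn.
- by rewrite /minn; case: ifP.
- by exists k.
Qed.

Lemma setmin_ltn S : (setmin S < n)%N = (S != set0).
Proof.
apply/idP/set0Pn => [/setmin_mem [k kS _]|[k /setmin_le le_k]]; first by exists k.
exact: leq_ltn_trans le_k (ltn_ord k).
Qed.

Lemma setmin_diffP A B :
  reflect (exists k, [/\ k \in A, k \notin B & forall j : 'I_n, (j < k)%N -> (j \in A) = (j \in B)])
          (setmin (A :\: B) < setmin (B :\: A))%N.
Proof.
apply: (iffP idP) => [lt_AB|[k [kA kB agree]]].
- have [k kAB eq_k] := setmin_mem (leq_trans lt_AB (setmin_leqn _)).
  move: kAB; rewrite inE => /andP [kB kA]; exists k; split=> // j lt_jk.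
  apply/idP/idP => [jA|jB]; apply: contraTT lt_jk => jN; rewrite -leqNgt.
    by rewrite -eq_k setmin_le // inE jN.
  by apply: ltnW; rewrite -eq_k (leq_trans lt_AB) // setmin_le // inE jN.
- apply: (@leq_ltn_trans k); first by rewrite setmin_le // inE kA kB.
  case: (ltnP (setmin (B :\: A)) n) => [/setmin_mem [j jBA ->]|]; last first.
    exact: leq_trans (ltn_ord k).
  move: jBA; rewrite inE => /andP [jA jB]; rewrite ltnNge leq_eqVlt negb_or.
  apply/andP; split; first by apply: contraNneq kB => /val_inj <-.
  by apply: contraNN jA => /agree ->.
Qed.

Lemma setmin_diff_trans A B C :
  (setmin (A :\: B) < setmin (B :\: A))%N -> (setmin (B :\: C) < setmin (C :\: B))%N ->
  (setmin (A :\: C) < setmin (C :\: A))%N.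
Proof.
move=> /setmin_diffP [k1 [k1A k1B agree1]] /setmin_diffP [k2 [k2B k2C agree2]].
apply/setmin_diffP; case: (ltngtP k1 k2) => [lt12|lt21|/val_inj eq12].
- exists k1; split=> //; first by rewrite -agree2.
  by move=> j lt_j; rewrite agree1 // agree2 // (ltn_trans lt_j lt12).
- exists k2; split=> //; first by rewrite agree1.
  by move=> j lt_j; rewrite agree1 ?agree2 // (ltn_trans lt_j lt21).
- by move: k1B; rewrite eq12 k2B.
Qed.

Lemma setmin_diff_total A B : A != B ->
  (setmin (A :\: B) < setmin (B :\: A))%N || (setmin (B :\: A) < setmin (A :\: B))%N.
Proof.
apply: contraNT; case: (ltngtP (setmin (A :\: B)) (setmin (B :\: A))) => // eq_min _.
case: (ltnP (setmin (A :\: B)) n) => [lt_n|].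
  have [k kAB ek] := setmin_mem lt_n; rewrite eq_min in lt_n.
  have [k' kBA ek'] := setmin_mem lt_n.
  have eq_k : k = k' by apply: val_inj; rewrite /= -ek -ek' eq_min.
  by move: kAB kBA; rewrite eq_k !inE => /andP [_ ->] /andP [].
have setmin_n S : (n <= setmin S)%N -> S = set0 by rewrite leqNgt setmin_ltn negbK => /eqP.
move=> ge_n; rewrite eqEsubset -!setD_eq0 (setmin_n _ ge_n) eqxx.
by rewrite (setmin_n (B :\: A)) ?eqxx // -eq_min.
Qed.

End SetMin.

Section VariableOrders.
Variable n : nat.
Implicit Types a b c : V n.

Lemma leL_refl a : leL a a.
Proof. by rewrite /leL leqnn subxx. Qed.

Lemma leL_trans a b c : leL a b -> leL b c -> leL a c.
Proof.
by move=> /andP [le1 sub1] /andP [le2 sub2]; rewrite /leL (leq_trans le1 le2) (subset_trans sub1 sub2).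
Qed.

Lemma prec_irr a : ~~ prec a a.
Proof. by rewrite /prec !ltnn /= !andbF. Qed.

Lemma prec_trans a b c : prec a b -> prec b c -> prec a c.
Proof.
case: a b c => i A [j B] [k C]; rewrite /prec /=.
move=> /or3P [h1|/andP[/eqP e1 h1]|/and3P[/eqP e1 /eqP c1 s1]]
        /or3P [h2|/andP[/eqP e2 h2]|/and3P[/eqP e2 /eqP c2 s2]]; apply/or3P.
- by apply: Or31; apply: ltn_trans h1 h2.
- by apply: Or31; rewrite -e2.
- by apply: Or31; rewrite -e2.
- by apply: Or31; rewrite e1.
- by apply: Or32; rewrite e1 e2 eqxx (ltn_trans h1 h2).
- by apply: Or32; rewrite e1 e2 eqxx -c2.
- by apply: Or31; rewrite e1.
- by apply: Or32; rewrite e1 e2 eqxx c1.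
- by apply: Or33; rewrite e1 e2 c1 c2 !eqxx (setmin_diff_trans s1 s2).
Qed.

Lemma prec_asym a b : prec a b -> ~~ prec b a.
Proof. by move=> ab; apply/negP => /(prec_trans ab); apply/negP/prec_irr. Qed.

Lemma prec_total a b : a != b -> prec a b || prec b a.
Proof.
case: a b => i A [j B] neq; rewrite /prec /=.
case: (ltngtP i j) => [_|_|/val_inj eq_ij]; rewrite ?orbT //; subst j.
case: (ltngtP #|A| #|B|) => _; rewrite eqxx ?orbT //=.
by apply: setmin_diff_total; apply: contraNneq neq => ->.
Qed.

Lemma leL_prec a b : leL a b -> a != b -> prec a b.
Proof.
case: a b => i A [j B] /andP [/= le_ij sub_AB] neq; rewrite /prec /=.
move: le_ij; rewrite leq_eqVlt => /orP [/eqP/val_inj eq_ij|->//].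
rewrite eq_ij eqxx ltnn /= proper_card // properEneq sub_AB andbT.
by apply: contraNneq neq => ->; rewrite eq_ij.
Qed.

End VariableOrders.

Section Grevlex.
Variable n : nat.
Implicit Types u v w : 'X_{1..NV n}.

Lemma expo_inj u v : expo u =1 expo v -> u = v.
Proof. by move=> eq_uv; apply/mnmP => k; rewrite -(enum_valK k); exact: eq_uv. Qed.

Lemma expoD u v a : expo (u + v)%MM a = (expo u a + expo v a)%N.
Proof. exact: mnmDE. Qed.

Lemma grevlex_ltI u v a : mdeg u = mdeg v -> (expo v a < expo u a)%N ->
  (forall b, prec a b -> expo u b = expo v b) -> grevlex_lt u v.
Proof. by move=> eq_deg lt_a above; right; split=> //; exists a; split=> // /eqP; rewrite gtn_eqF. Qed.

Lemma grevlex_lt_asym u v : grevlex_lt u v -> ~ grevlex_lt v u.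
Proof.
move=> [lt1|[eq1 [a [ne1 [lt1 above1]]]]] [lt2|[eq2 [b [ne2 [lt2 above2]]]]].
- by move: (ltn_trans lt1 lt2); rewrite ltnn.
- by move: lt1; rewrite eq2 ltnn.
- by move: lt2; rewrite eq1 ltnn.
- have [eq_ab|neq_ab] := eqVneq a b.
    by subst b; move: (ltn_trans lt1 lt2); rewrite ltnn.
  by case/orP: (prec_total neq_ab) => [/above1|/above2] /esym.
Qed.

Lemma grevlex_lt_trans u v w : grevlex_lt u v -> grevlex_lt v w -> grevlex_lt u w.
Proof.
move=> [lt1|[eq1 [a [_ [lt1 above1]]]]] [lt2|[eq2 [b [_ [lt2 above2]]]]].
- by left; exact: ltn_trans lt1 lt2.
- by left; rewrite -eq2.
- by left; rewrite eq1.
- have eq_deg : mdeg u = mdeg w by rewrite eq1.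
  have [eq_ab|neq_ab] := eqVneq a b.
    by subst b; apply: (grevlex_ltI eq_deg (ltn_trans lt2 lt1)) => c ac; rewrite above1 ?above2.
  case/orP: (prec_total neq_ab) => [ab|ba].
  + apply: (grevlex_ltI (a := b) eq_deg); first by rewrite above1.
    by move=> c bc; rewrite above1 ?above2 // (prec_trans ab bc).
  + apply: (grevlex_ltI (a := a) eq_deg); first by rewrite -above2.
    by move=> c ac; rewrite above1 ?above2 // (prec_trans ba ac).
Qed.

Lemma grevlex_lt_total u v : u != v -> grevlex_lt u v \/ grevlex_lt v u.
Proof.
move=> neq_uv; case: (ltngtP (mdeg u) (mdeg v)) => [lt_deg|lt_deg|eq_deg].
- by left; left.
- by right; left.
pose diff := [seq a <- enum {: V n} | expo u a != expo v a].
have mem_diff a : (a \in diff) = (expo u a != expo v a) by rewrite mem_filter mem_enum andbT.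
have diff_neq0 : diff != [::].
  apply: contraNneq neq_uv => diff0; apply/eqP/expo_inj => a; apply/eqP.
  by apply: contraT; rewrite -mem_diff diff0.
have preceq_trans (x y z : V n) :
    x = y \/ prec x y -> y = z \/ prec y z -> x = z \/ prec x z.
  by case=> [->|xy] [<-|yz]; [left|right|right|right; exact: prec_trans xy yz].
have preceq_total (x y : V n) : (x = y \/ prec x y) \/ (y = x \/ prec y x).
  by case: (eqVneq x y) => [->|/prec_total/orP [] ?]; [left; left|left; right|right; right].
have [c diff_c c_top] := seq_greatest preceq_trans (in2W preceq_total) diff_neq0.
have above b : prec c b -> expo u b = expo v b.
  move=> cb; apply/eqP; apply: contraT; rewrite -mem_diff => /c_top [eq_bc|bc].
    by move: cb; rewrite eq_bc (negbTE (prec_irr c)).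
  by move: (prec_asym bc); rewrite cb.
move: diff_c; rewrite mem_diff; case: ltngtP => // lt_c _.
- by right; apply: (grevlex_ltI (esym eq_deg) lt_c) => b /above.
- by left; exact: grevlex_ltI eq_deg lt_c above.
Qed.

Lemma grevlex_ltD u v w : grevlex_lt u v -> grevlex_lt (u + w)%MM (v + w)%MM.
Proof.
move=> [lt_deg|[eq_deg [a [_ [lt_a above]]]]]; first by left; rewrite !mdegD ltn_add2r.
apply: (grevlex_ltI (a := a)); first by rewrite !mdegD eq_deg.
  by rewrite !expoD ltn_add2r.
by move=> b ab; rewrite !expoD above.
Qed.

Lemma grevlex_le_trans u v w : grevlex_le u v -> grevlex_le v w -> grevlex_le u w.
Proof. by case=> [->|uv] [<-|vw]; [left|right|right|right; exact: grevlex_lt_trans uv vw]. Qed.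

Lemma grevlex_le_total u v : grevlex_le u v \/ grevlex_le v u.
Proof.
by case: (eqVneq u v) => [->|/grevlex_lt_total []]; [left; left|left; right|right; right].
Qed.

Section LeadingMonomial.
Variable K : fieldType.

Lemma lead_mon_exists (p : {mpoly K[NV n]}) : p != 0%R -> exists m, is_lead_mon p m.
Proof.
move=> p_neq0; have supp_neq0 : msupp p != [::] by rewrite msupp_eq0.
have [m mp m_top] := seq_greatest (@grevlex_le_trans) (in2W grevlex_le_total) supp_neq0.
by exists m.
Qed.

Lemma lead_mon_uniq (p : {mpoly K[NV n]}) m1 m2 :
  is_lead_mon p m1 -> is_lead_mon p m2 -> m1 = m2.
Proof.
move=> [m1p le1] [m2p le2]; case: (le2 _ m1p) => // lt12; case: (le1 _ m2p) => // lt21.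
by case: (grevlex_lt_asym lt12 lt21).
Qed.

End LeadingMonomial.
End Grevlex.

Lemma sum_nat_gt0 (I : finType) (P : pred I) (F : I -> nat) :
  (0 < \sum_(i | P i) F i)%N -> exists2 i, P i & (0 < F i)%N.
Proof. by rewrite lt0n sum_nat_eq0 => /forallPn [i]; rewrite negb_imply -lt0n => /andP []; exists i. Qed.

Section MonomialMap.
Variable n : nat.
Implicit Types (u v m : 'X_{1..NV n}) (a c : V n).

Definition phi_img_mnm a : 'X_{1..n + n} :=
  (U_(lshift n a.1) + \sum_(j in a.2) U_(rshift n j))%MM.

Definition phi_mnm m : 'X_{1..n + n} := (\sum_a phi_img_mnm a *+ expo m a)%MM.

Lemma phi_img_mnm_lshift a i : phi_img_mnm a (lshift n i) = (a.1 == i).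
Proof.
rewrite mnmDE mnm1E eq_lshift mnm_sumE big1 ?addn0 // => j _.
by rewrite mnm1E eq_rlshift.
Qed.

Lemma phi_img_mnm_rshift a j : phi_img_mnm a (rshift n j) = (j \in a.2).
Proof.
rewrite mnmDE mnm1E eq_lrshift add0n mnm_sumE.
have [ja|jNa] := boolP (j \in a.2).
  rewrite (bigD1 j) //= mnm1E eqxx big1 // => k /andP [_ kj].
  by rewrite mnm1E eq_rshift (negbTE kj).
rewrite big1 // => k ka; have kj : k != j by apply: contraNneq jNa => <-.
by rewrite mnm1E eq_rshift (negbTE kj).
Qed.

Lemma phi_mnmD u v : phi_mnm (u + v)%MM = (phi_mnm u + phi_mnm v)%MM.
Proof.
apply/mnmP => k; rewrite mnmDE !mnm_sumE -big_split; apply: eq_bigr => a _.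
by rewrite !mulmnE expoD mulnDr.
Qed.

Lemma phi_mnm1 a : phi_mnm U_(enum_rank a) = phi_img_mnm a.
Proof.
apply/mnmP => k; rewrite mnm_sumE (bigD1 a) //= big1 ?addn0.
  by rewrite mulmnE /expo mnm1E eqxx muln1.
by move=> b ba; rewrite mulmnE /expo mnm1E (inj_eq enum_rank_inj) eq_sym (negbTE ba) muln0.
Qed.

Lemma phi_mnm_lshift m i : phi_mnm m (lshift n i) = (\sum_(a : V n | a.1 == i) expo m a)%N.
Proof.
rewrite mnm_sumE [RHS]big_mkcond; apply: eq_bigr => a _.
by rewrite mulmnE phi_img_mnm_lshift; case: (a.1 == i); rewrite ?mul1n.
Qed.

Lemma phi_mnm_rshift m j : phi_mnm m (rshift n j) = (\sum_(a : V n | j \in a.2) expo m a)%N.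
Proof.
rewrite mnm_sumE [RHS]big_mkcond; apply: eq_bigr => a _.
by rewrite mulmnE phi_img_mnm_rshift; case: (j \in a.2); rewrite ?mul1n.
Qed.

Lemma mdeg_phi_mnm m : mdeg m = (\sum_i phi_mnm m (lshift n i))%N.
Proof.
rewrite mdegE (reindex (@enum_rank (V n))) /=; last exact: onW_bij (enum_rank_bij _).
under [RHS]eq_bigr do rewrite phi_mnm_lshift.
by rewrite (partition_big (fun a : V n => a.1) predT).
Qed.

Lemma phi_mnm_mdeg u v : phi_mnm u = phi_mnm v -> mdeg u = mdeg v.
Proof. by move=> eq_phi; rewrite !mdeg_phi_mnm eq_phi. Qed.

(* Both coordinates of a variable are read off the image of the monomial, so a
   common upper bound in L of the variables of [v] also bounds those of [u]. *)
Lemma phi_mnm_bounded u v T : phi_mnm u = phi_mnm v ->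
  (forall c, 0 < expo v c -> leL c T)%N -> forall c, (0 < expo u c)%N -> leL c T.
Proof.
move=> eq_phi v_le c uc; apply/andP; split.
  have : (0 < phi_mnm v (lshift n c.1))%N.
    by rewrite -eq_phi phi_mnm_lshift (bigD1 c) //= (leq_trans uc) ?leq_addr.
  by rewrite phi_mnm_lshift => /sum_nat_gt0 [a /eqP <- /v_le /andP []].
apply/subsetP => j jc; have : (0 < phi_mnm v (rshift n j))%N.
  by rewrite -eq_phi phi_mnm_rshift (bigD1 c) //= (leq_trans uc) ?leq_addr.
by rewrite phi_mnm_rshift => /sum_nat_gt0 [a ja /v_le /andP [_ /subsetP]]; apply.
Qed.

Section Polynomials.
Variable K : fieldType.

Lemma phi_imgE a : phi_img K a = 'X_[phi_img_mnm a].
Proof.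
rewrite /phi_img /phi_img_mnm mpolyXD; congr (_ * _)%R.
by rewrite (big_morph (fun x : 'X_{1..n + n} => 'X_[x] : {mpoly K[n + n]}) (@mpolyXD _ _) (@mpolyX0 _ _)).
Qed.

Lemma phi'X m : phi' ('X_[m] : {mpoly K[NV n]}) = 'X_[phi_mnm m].
Proof.
rewrite /phi' comp_mpolyX.
under eq_bigr do rewrite tnth_mktuple phi_imgE.
rewrite mprodXnE /phi_mnm (reindex (@enum_rank (V n))) /=; last exact: onW_bij (enum_rank_bij _).
by under eq_bigr do rewrite enum_rankK.
Qed.

Lemma phi'E (f : {mpoly K[NV n]}) : phi' f = (\sum_(u <- msupp f) f@_u *: 'X_[phi_mnm u])%R.
Proof. by rewrite /phi' comp_mpolyEX; apply: eq_bigr => u _; rewrite -phi'X. Qed.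

(* The coefficient of [phi_mnm m] in [phi' f] must cancel. *)
Lemma I_phi'_collision (f : {mpoly K[NV n]}) m : I_phi' f -> m \in msupp f ->
  exists2 u, u \in msupp f & u != m /\ phi_mnm u = phi_mnm m.
Proof.
move=> f_ker mf.
have [/hasP [u uf /andP [nu /eqP eu]]|/hasPn no_collision] :=
  boolP (has (fun u => (u != m) && (phi_mnm u == phi_mnm m)) (msupp f)); first by exists u.
have coef_phi' : ((phi' f)@_(phi_mnm m) = f@_m)%R.
  rewrite phi'E raddf_sum /= (bigD1_seq m) ?msupp_uniq //= mcoeffZ mcoeffX eqxx mulr1.
  rewrite big1_seq ?addr0 // => u /andP [nu uf]; rewrite mcoeffZ mcoeffX.
  by move: (no_collision u uf); rewrite nu /= => /negbTE ->; rewrite mulr0.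
by move: mf; rewrite mcoeff_msupp -coef_phi' f_ker mcoeff0 eqxx.
Qed.
End Polynomials.
End MonomialMap.

Section ChainMonomials.
Variable n : nat.
Implicit Types (u v w : 'X_{1..NV n}) (a b c T : V n).

Definition chain_mnm v : Prop :=
  forall a b, (0 < expo v a)%N -> (0 < expo v b)%N -> leL a b || leL b a.

Lemma chain_mnm_le w v : (w <= v)%MM -> chain_mnm v -> chain_mnm w.
Proof.
move=> /mnm_lepP le_wv v_chain a b wa wb.
by apply: v_chain; [exact: leq_trans wa (le_wv _)|exact: leq_trans wb (le_wv _)].
Qed.

Lemma chain_mnm_top v : chain_mnm v -> v != 0%MM ->
  exists T, (0 < expo v T)%N /\ forall c, (0 < expo v c)%N -> leL c T.
Proof.
move=> v_chain v_neq0; pose supp := [seq a <- enum {: V n} | (0 < expo v a)%N].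
have supp_neq0 : supp != [::].
  have [k vk] : exists k, v k != 0%N.
    by apply/existsP; apply: contraNT v_neq0 => /existsPn v0; apply/eqP/mnmP => k; rewrite mnm0E; apply/eqP/negPn.
  have : enum_val k \in supp by rewrite mem_filter mem_enum /expo enum_valK lt0n vk.
  by apply: contraTneq => ->.
have supp_total : {in supp &, forall a b, leL a b \/ leL b a}.
  by move=> a b; rewrite !mem_filter => /andP [va _] /andP [vb _]; apply/orP/v_chain.
have [T suppT T_top] := seq_greatest (@leL_trans n) supp_total supp_neq0.
exists T; split; first by move: suppT; rewrite mem_filter => /andP [].
by move=> c vc; apply: T_top; rewrite mem_filter vc mem_enum.
Qed.

Lemma expo_above_bound v T b :
  (forall c, (0 < expo v c)%N -> leL c T) -> prec T b -> expo v b = 0%N.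
Proof.
move=> v_le Tb; apply/eqP; rewrite -leqn0 leqNgt; apply/negP => /v_le bT.
have [eq_bT|neq_bT] := eqVneq b T; first by move: Tb; rewrite eq_bT (negbTE (prec_irr T)).
by move: (prec_asym (leL_prec bT neq_bT)); rewrite Tb.
Qed.

(* Induction on the degree: the top T of the chain v bounds every variable of u
   (phi_mnm_bounded), so no variable above T occurs in u or v.  Either u misses
   T, which then decides the comparison, or one copy of T cancels on both sides. *)
Lemma chain_mnm_grevlex_min v u :
  chain_mnm v -> phi_mnm u = phi_mnm v -> u != v -> grevlex_lt v u.
Proof.
move: {2}(mdeg v) (erefl (mdeg v)) => d; elim: d u v => [|d IH] u v deg_v v_chain eq_phi neq_uv.
  have /eqP u0 : u == 0%MM by rewrite -mdeg_eq0 (phi_mnm_mdeg eq_phi) deg_v.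
  have /eqP v0 : v == 0%MM by rewrite -mdeg_eq0 deg_v.
  by rewrite u0 v0 eqxx in neq_uv.
have v_neq0 : v != 0%MM by rewrite -mdeg_eq0 deg_v.
have [T [vT v_le]] := chain_mnm_top v_chain v_neq0.
have u_le := phi_mnm_bounded eq_phi v_le.
have [uT0|uT] := posnP (expo u T).
  apply: (grevlex_ltI (a := T)); first by rewrite (phi_mnm_mdeg eq_phi).
    by rewrite uT0.
  by move=> b Tb; rewrite (expo_above_bound v_le Tb) (expo_above_bound u_le Tb).
pose UT := U_(enum_rank T)%MM.
have Uu : (UT <= u)%MM by rewrite lep1mP -lt0n.
have Uv : (UT <= v)%MM by rewrite lep1mP -lt0n.
rewrite -(submK Uu) -(submK Uv); apply: grevlex_ltD; apply: IH.
- by apply/eqP; rewrite -eqSS -deg_v -{2}(submK Uv) mdegD mdeg1 addn1.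
- exact: chain_mnm_le (lem_subr v UT) v_chain.
- by apply: (@addIm _ (phi_mnm UT)); rewrite -!phi_mnmD !submK.
- by apply: contraNneq neq_uv => eq_sub; rewrite -(submK Uu) -(submK Uv) eq_sub.
Qed.

End ChainMonomials.

Section Binomials.
Variable n : nat.
Implicit Types (a b c d : V n) (m : 'X_{1..NV n}).

Definition meetL a b : V n := (ordmin a.1 b.1, a.2 :&: b.2).
Definition joinL a b : V n := (ordmax a.1 b.1, a.2 :|: b.2).

Lemma meetLC a b : meetL a b = meetL b a.
Proof.
rewrite /meetL /ordmin setIC; congr (_, _).
by case: (ltngtP a.1 b.1) => // /val_inj.
Qed.

Lemma joinLC a b : joinL a b = joinL b a.
Proof.
rewrite /joinL /ordmax setUC; congr (_, _).
by case: (ltngtP a.1 b.1) => // /val_inj.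
Qed.

Lemma leL_meetl a b : leL (meetL a b) a.
Proof. by rewrite /leL /= subsetIl andbT /ordmin; case: (leqP a.1 b.1) => // /ltnW. Qed.

Lemma leL_meetr a b : leL (meetL a b) b.
Proof. by rewrite /leL /= subsetIr andbT /ordmin; case: (leqP a.1 b.1) => // /ltnW. Qed.

Lemma leL_joinl a b : leL a (joinL a b).
Proof. by rewrite /leL /= subsetUl andbT /ordmax; case: (leqP a.1 b.1) => // /ltnW. Qed.

Lemma leL_joinr a b : leL b (joinL a b).
Proof. by rewrite /leL /= subsetUr andbT /ordmax; case: (leqP a.1 b.1) => // /ltnW. Qed.

Definition mnm2 a b : 'X_{1..NV n} := (U_(enum_rank a) + U_(enum_rank b))%MM.

Lemma expo_mnm2 a b c : expo (mnm2 a b) c = ((a == c) + (b == c))%N.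
Proof. by rewrite /expo mnmDE !mnm1E !(inj_eq enum_rank_inj). Qed.

Lemma mdeg_mnm2 a b : mdeg (mnm2 a b) = 2%N.
Proof. by rewrite mdegD !mdeg1. Qed.

(* The modular law of L, seen through phi': y_i y_j = y_(min) y_(max) and
   beta^A beta^B = beta^(A cap B) beta^(A cup B). *)
Lemma phi_mnm_meet_join a b :
  phi_mnm (mnm2 (meetL a b) (joinL a b)) = phi_mnm (mnm2 a b).
Proof.
rewrite !phi_mnmD !phi_mnm1; apply/mnmP => k; rewrite mnmDE [RHS]mnmDE.
rewrite -(splitK k); case: (split k) => [i|j] /=.
  rewrite !phi_img_mnm_lshift /= /ordmin /ordmax; case: leqP => _ //; exact: addnC.
by rewrite !phi_img_mnm_rshift /= in_setI in_setU; case: (j \in a.2); case: (j \in b.2).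
Qed.

Lemma mnm2_le_pair a b c d : a != b -> (mnm2 a b <= mnm2 c d)%MM ->
  (c = a /\ d = b) \/ (c = b /\ d = a).
Proof.
move=> neq_ab /mnm_lepP le_ab.
have : (expo (mnm2 a b) a <= expo (mnm2 c d) a)%N := le_ab (enum_rank a).
have : (expo (mnm2 a b) b <= expo (mnm2 c d) b)%N := le_ab (enum_rank b).
rewrite !expo_mnm2 !eqxx (eq_sym b) (negbTE neq_ab).
move=> le_b le_a.
have /orP [/eqP ca|/eqP da] : (c == a) || (d == a) by move: le_a; case: (c == a); case: (d == a).
all: have /orP [/eqP cb|/eqP db] : (c == b) || (d == b) by move: le_b; case: (c == b); case: (d == b).
- by move: neq_ab; rewrite -ca -cb eqxx.
- by left.
- by right.
- by move: neq_ab; rewrite -da -db eqxx.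
Qed.

Lemma mnm2_le a b m : a != b -> (0 < expo m a)%N -> (0 < expo m b)%N ->
  (mnm2 a b <= m)%MM.
Proof.
move=> neq_ab ma mb; apply/mnm_lepP => k; rewrite -(enum_valK k).
change (expo (mnm2 a b) (enum_val k) <= expo m (enum_val k))%N.
rewrite expo_mnm2; set c := enum_val k.
case: (eqVneq a c) => [eq_ac|_]; case: (eqVneq b c) => [eq_bc|_] //=.
- by move: neq_ab; rewrite eq_ac eq_bc eqxx.
- by rewrite -eq_ac.
- by rewrite -eq_bc.
Qed.

Section Incomparable.
Variables a b : V n.
Hypothesis ab : incomparableL a b.

Lemma incomparableL_neq : a != b.
Proof. by apply: contraTneq ab => ->; rewrite /incomparableL leL_refl. Qed.

Lemma joinL_neql : joinL a b != a.
Proof. by apply: contraTneq ab => eq_ja; rewrite /incomparableL -{2}eq_ja leL_joinr andbF. Qed.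

Lemma joinL_neqr : joinL a b != b.
Proof. by apply: contraTneq ab => eq_jb; rewrite /incomparableL -{1}eq_jb leL_joinl. Qed.

Lemma meetL_neq_joinL : meetL a b != joinL a b.
Proof.
apply: contraTneq ab => eq_mj; rewrite /incomparableL.
by rewrite (leL_trans (leL_joinl a b)) // -eq_mj leL_meetr.
Qed.

Lemma mnm2_meet_join_grevlex : grevlex_lt (mnm2 (meetL a b) (joinL a b)) (mnm2 a b).
Proof.
(* [joinL a b] decides the comparison: it is prec-above the other three variables. *)
have joinL_top c : c \in [:: a; b; meetL a b] -> prec c (joinL a b).
  rewrite !inE => /or3P [] /eqP ->; apply: leL_prec.
  - exact: leL_joinl.
  - by rewrite eq_sym joinL_neql.
  - exact: leL_joinr.
  - by rewrite eq_sym joinL_neqr.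
  - exact: leL_trans (leL_meetl a b) (leL_joinl a b).
  - exact: meetL_neq_joinL.
have neq_join x : x \in [:: a; b; meetL a b] -> (x == joinL a b) = false.
  by move=> /joinL_top x_join; apply/negbTE; apply: contraTneq x_join => ->; exact: prec_irr.
apply: (grevlex_ltI (a := joinL a b)); first by rewrite !mdeg_mnm2.
  by rewrite !expo_mnm2 eqxx !neq_join ?inE ?eqxx ?orbT.
move=> c join_c; rewrite !expo_mnm2.
have neq_c x : x \in [:: a; b; meetL a b] -> (x == c) = false.
  by move=> /joinL_top x_join; apply/negbTE; apply: contraTneq x_join => ->; exact: prec_asym.
suff -> : (joinL a b == c) = false by rewrite !neq_c ?inE ?eqxx ?orbT.
by apply/negbTE; apply: contraTneq join_c => <-; exact: prec_irr.
Qed.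
End Incomparable.
End Binomials.

Section BinomialPolynomials.
Variables (n : nat) (K : fieldType).
Implicit Types (a b c d : V n) (m : 'X_{1..NV n}).
Local Open Scope ring_scope.

Definition gbin a b : {mpoly K[NV n]} :=
  xv K a * xv K b - xv K (meetL a b) * xv K (joinL a b).

Lemma G_LP g : G_L g -> exists a b, incomparableL a b /\ g = gbin a b.
Proof. by []. Qed.

Lemma gbinE a b : gbin a b = 'X_[mnm2 a b] - 'X_[mnm2 (meetL a b) (joinL a b)].
Proof. by rewrite /gbin /xv -!mpolyXD. Qed.

Lemma gbinC a b : gbin b a = gbin a b.
Proof. by rewrite /gbin mulrC meetLC joinLC. Qed.

Lemma phi'_gbin a b : phi' (gbin a b) = 0.
Proof. by rewrite gbinE [LHS]comp_mpolyB -!/(phi' _) !phi'X phi_mnm_meet_join subrr. Qed.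

Lemma gbin_msupp a b m : m \in msupp (gbin a b) ->
  m = mnm2 a b \/ m = mnm2 (meetL a b) (joinL a b).
Proof.
rewrite mcoeff_msupp gbinE mcoeffB !mcoeffX.
case: (eqVneq (mnm2 a b) m) => [<-|_]; first by left.
by case: (eqVneq (mnm2 (meetL a b) (joinL a b)) m) => [<-|_]; [right|rewrite subrr eqxx].
Qed.

Section Incomparable.
Variables a b : V n.
Hypothesis ab : incomparableL a b.

Lemma gbin_lead_coef : (gbin a b)@_(mnm2 a b) = 1.
Proof.
have neq_mnm2 : mnm2 (meetL a b) (joinL a b) != mnm2 a b.
  by apply/eqP => eq_mnm2; move: (mnm2_meet_join_grevlex ab); rewrite eq_mnm2 => /[dup]/grevlex_lt_asym.
by rewrite gbinE mcoeffB !mcoeffX eqxx (negbTE neq_mnm2) subr0.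
Qed.

Lemma gbin_neq0 : gbin a b != 0.
Proof. by apply: contra_neq (@oner_neq0 K) => gbin0; rewrite -gbin_lead_coef gbin0 mcoeff0. Qed.

Lemma gbin_lead : is_lead_mon (gbin a b) (mnm2 a b).
Proof.
split; first by rewrite mcoeff_msupp gbin_lead_coef oner_neq0.
by move=> m /gbin_msupp [->|->]; [left|right; exact: mnm2_meet_join_grevlex].
Qed.

End Incomparable.

(* The only quadratic monomial divisible by the leading monomial [x_c x_d] of a
   binomial is [x_c x_d] itself, and the trailing monomial is a comparable pair. *)
Lemma gbin_msupp_not_dvd a b c d m : incomparableL a b -> incomparableL c d ->
  gbin c d <> gbin a b -> m \in msupp (gbin a b) -> ~ (mnm2 c d <= m)%MM.
Proof.
move=> ab cd neq_gbin /gbin_msupp [->|->] /(mnm2_le_pair (incomparableL_neq cd)) [[eq_c eq_d]|[eq_c eq_d]];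
  subst c d.
- by [].
- by move: neq_gbin; rewrite gbinC.
- by move: cd; rewrite /incomparableL (leL_trans (leL_meetl a b) (leL_joinl a b)).
- by move: cd; rewrite /incomparableL (leL_trans (leL_meetl a b) (leL_joinl a b)) andbF.
Qed.

Lemma lead_mon_I_phi'_incomparable (f : {mpoly K[NV n]}) mf :
  I_phi' f -> is_lead_mon f mf ->
  exists a b, [/\ (0 < expo mf a)%N, (0 < expo mf b)%N & incomparableL a b].
Proof.
move=> f_ker [mf_supp mf_top].
have [/existsP [a /existsP [b /and3P [ma mb ab]]]|no_pair] :=
  boolP [exists a, exists b, [&& 0 < expo mf a, 0 < expo mf b & incomparableL a b]%N].
  by exists a, b.
have mf_chain : chain_mnm mf.
  move=> a b ma mb; apply: contraNT no_pair; rewrite negb_or => ab.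
  by apply/existsP; exists a; apply/existsP; exists b; rewrite ma mb.
have [u u_supp [neq_u eq_phi]] := I_phi'_collision f_ker mf_supp.
have lt_mf_u := chain_mnm_grevlex_min mf_chain eq_phi neq_u.
case: (mf_top u u_supp) => [eq_u|/grevlex_lt_asym//].
by move: neq_u; rewrite eq_u eqxx.
Qed.

End BinomialPolynomials.

Theorem theorem3p4 (n : nat) (K : fieldType) :
  is_reduced_groebner_basis (@G_L n K) (@I_phi' n K).
Proof.
split; [split|split].
- by move=> g /G_LP [a [b [_ ->]]]; exact: phi'_gbin.
- move=> f f_ker f_neq0; have [mf mf_lead] := lead_mon_exists f_neq0.
  have [a [b [ma mb ab]]] := lead_mon_I_phi'_incomparable f_ker mf_lead.
  exists (gbin K a b); split; [by exists a, b | exact: gbin_neq0 |].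
  exists mf, (mnm2 a b); split=> //; first exact: gbin_lead.
  exact: mnm2_le (incomparableL_neq ab) ma mb.
- move=> g /G_LP [a [b [ab ->]]]; exists (mnm2 a b).
  by split; [exact: gbin_lead | exact: gbin_lead_coef].
- move=> g g' /G_LP [a [b [ab ->]]] /G_LP [c [d [cd ->]]] neq_gbin m mg' m_supp lead_cd.
  rewrite (lead_mon_uniq lead_cd (gbin_lead K cd)).
  exact: gbin_msupp_not_dvd ab cd neq_gbin m_supp.
Qed.
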